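(* Let $\mathcal{T}=(\mathbb{K}_i,\phi_i)_{i=0,\dots,m}$ be a tower with $\mathbb{K}_0=\emptyset$ whose maps are elementary inclusions or elementary contractions, named according to the naming convention below, and let $\hat{\mathbb{K}}_0,\dots,\hat{\mathbb{K}}_m$ be the active small coning construction. For every $0\le i\le m$, $\mathbb{K}_i\subseteq\hat{\mathbb{K}}_i$ and the complex $\hat{\mathbb{K}}_i$ collapses to $\mathbb{K}_i$.
   Context: A free face of a complex is a simplex with exactly one proper coface; an elementary collapse removes a free face and its unique proper coface; $\mathbb{K}$ collapses to $\mathbb{L}$ if a sequence of elementary collapses transforms $\mathbb{K}$ into $\mathbb{L}$. Elementary inclusion: $\mathbb{K}_{i+1}=\mathbb{K}_i\cup\{\sigma\}$, $\sigma\notin\mathbb{K}_i$. Elementary contraction of distinct vertices $u,v$: for one of them, say $v$, the vertex set of $\mathbb{K}_{i+1}$ is that of $\mathbb{K}_i$ minus $v$, $\phi_i(u)=\phi_i(v)=u$, identity elsewhere, $\mathbb{K}_{i+1}=\phi_i(\mathbb{K}_i)$. Active small coning construction: $\hat{\mathbb{K}}_0=\emptyset$; vertices flagged active/inactive, simplex active iff all its vertices are; $\mathrm{Act}\overline{\mathrm{St}}(w,\hat{\mathbb{K}}_i)$ = active simplices of $\hat{\mathbb{K}}_i$ in the closed star of $w$. Inclusion of $\sigma$: add $\sigma$, new vertex active. Contraction of $u,v$: if $|\mathrm{Act}\overline{\mathrm{St}}(u,\hat{\mathbb{K}}_i)|\le|\mathrm{Act}\overline{\mathrm{St}}(v,\hat{\mathbb{K}}_i)|$,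 $\hat{\mathbb{K}}_{i+1}=\hat{\mathbb{K}}_i\cup\{\{v\}\cup\tau:\tau\in\mathrm{Act}\overline{\mathrm{St}}(u,\hat{\mathbb{K}}_i)\}$ and $u$ is marked inactive; otherwise the same with $u,v$ exchanged. Naming convention: each contraction maps $u,v$ to the vertex not marked inactive. *)

From HB Require Import structures.
From mathcomp Require Import all_boot.
From mathcomp Require Import finmap.
Set Implicit Arguments. Unset Strict Implicit. Unset Printing Implicit Defensive.
Local Open Scope fset_scope.

Definition simplex := {fset nat}.
Definition complex := {fset simplex}.

Definition is_complex (K : complex) : Prop :=
  (forall s, s \in K -> s != fset0) /\
  (forall s t, s \in K -> t `<=` s -> t != fset0 -> t \in K).

Definition is_vertex (w : nat) (K : complex) : bool := [fset w] \in K.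

Definition proper_coface (K : complex) (s t : simplex) : bool :=
  (t \in K) && (s `<` t).

Definition free_face_with (K : complex) (s t : simplex) : Prop :=
  s \in K /\ proper_coface K s t /\
  (forall t', proper_coface K s t' -> t' = t).

Definition elementary_collapse (K L : complex) : Prop :=
  exists s t, free_face_with K s t /\ L = K `\` [fset s; t].

Inductive collapses : complex -> complex -> Prop :=
| collapses_refl K : collapses K K
| collapses_step K K' L : elementary_collapse K K' -> collapses K' L -> collapses K L.

Definition closed_star (w : nat) (K : complex) : {fset simplex} :=
  [fset t in K | [exists s : K, (w \in val s) && (t `<=` val s)]].

Definition act_closed_star (w : nat) (K : complex) (act : {fset nat}) : {fset simplex} :=
  [fset t in closed_star w K | t `<=` act].

Definition cone (v : nat) (S : {fset simplex}) : {fset simplex} :=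
  [fset (v |` (t : simplex)) | t : simplex in S].

Definition contract_map (x y : nat) (w : nat) : nat := if w == x then y else w.
Definition contract (x y : nat) (K : complex) : complex :=
  [fset (contract_map x y @` (s : simplex)) | s : simplex in K].

Inductive tower_op :=
| Incl of simplex
| Contr of nat & nat.

(* State: (K_i, hat K_i, set of active vertices). *)
Definition state := (complex * complex * {fset nat})%type.

Definition init_state : state := (fset0, fset0, fset0).

(* For a contraction of u, v the vertex marked inactive is the one whose
   active closed star is not larger (u in case of a tie); by the naming
   convention, both u and v are mapped to the other (still active) vertex. *)
Definition step (st : state) (op : tower_op) : state :=
  let: (K, Kh, act) := st in
  match op with
  | Incl s => (s |` K, s |` Kh, if #|` s| == 1 then act `|` s else act)
  | Contr u v =>
      let Su := act_closed_star u Kh act in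
      let Sv := act_closed_star v Kh act in
      if #|` Su| <= #|` Sv| then (contract u v K, Kh `|` cone v Su, act `\ u)
      else (contract v u K, Kh `|` cone u Sv, act `\ v)
  end.

Definition state_at (ops : seq tower_op) (i : nat) : state :=
  foldl step init_state (take i ops).

Definition K_at (ops : seq tower_op) (i : nat) : complex := (state_at ops i).1.1.
Definition Khat_at (ops : seq tower_op) (i : nat) : complex := (state_at ops i).1.2.

Definition valid_op (ops : seq tower_op) (i : nat) (op : tower_op) : Prop :=
  match op with
  | Incl s => s \notin K_at ops i /\ is_complex (s |` K_at ops i) /\
              (forall w, s = [fset w] -> forall j, j <= i -> ~~ is_vertex w (K_at ops j))
  | Contr u v => u != v /\ is_vertex u (K_at ops i) /\ is_vertex v (K_at ops i)
  end.

Definition valid_tower (ops : seq tower_op) : Prop :=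
  forall i, i < size ops -> valid_op ops i (nth (Contr 0 0) ops i).

From HB Require Import structures.
From mathcomp Require Import all_boot.
From mathcomp Require Import finmap.
Local Open Scope fset_scope.
Set Implicit Arguments. Unset Strict Implicit.

(** The invariant is that K_i is the full subcomplex
   of hat K_i spanned by the active vertices, which are exactly the vertices of
   K_i, and that hat K_i collapses to K_i. An inclusion adds the same simplex to
   both complexes; a new vertex is fresh, so no simplex of hat K_i becomes
   active. When u is contracted into v, the active closed star of u in hat K_i
   is the closed star St(u) of u in K_i, and the cone C = v * St(u) is glued to
   both complexes. C meets hat K_i only in active simplices, so hat K_i ∪ C
   collapses to K_i ∪ C; and K_i ∪ C collapses onto the contracted complex by
   removing the simplices that contain u, in pairs (r, r ∪ {v}) with v ∉ r. *)

Lemma fset_neq0 (x : nat) (t : {fset nat}) : x \in t -> t != fset0.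
Proof. by move=> xt; apply/fset0Pn; exists x. Qed.

Lemma fsetD1_cases (w : nat) (m : {fset nat}) : m = m `\ w \/ m = w |` (m `\ w).
Proof.
by case: (boolP (w \in m)) => wm; [right; rewrite fsetD1K | left; rewrite mem_fsetD1].
Qed.

Lemma fsetU1_inj (w : nat) (a b : {fset nat}) :
  w \notin a -> w \notin b -> w |` a = w |` b -> a = b.
Proof. by move=> wa wb eq_ab; rewrite -(fsetU1K wa) -(fsetU1K wb) eq_ab. Qed.

Lemma coneP v (S : {fset simplex}) m :
  reflect (exists2 t, t \in S & m = v |` t) (m \in cone v S).
Proof. exact: imfsetP. Qed.

Lemma mem_cone v (S : {fset simplex}) t : t \in S -> v |` t \in cone v S.
Proof. by move=> tS; apply/coneP; exists t. Qed.

Lemma cone0 v : cone v fset0 = fset0.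
Proof. by apply/fsetP => m; rewrite inE; apply/coneP => -[t]. Qed.

Lemma cone_pairsD1 w (P : {fset simplex}) r : r \in P ->
  P `|` cone w P = [fset r; w |` r] `|` (P `\ r `|` cone w (P `\ r)).
Proof.
move=> rP; rewrite -{1 2}(fsetD1K rP) [cone w _]imfsetU1.
apply/fsetP => m; rewrite !inE; case: (m == r); case: (m == w |` r) => //=.
by rewrite orbT.
Qed.

Lemma closed_starP w (K : complex) t :
  reflect (t \in K /\ exists2 s, s \in K & (w \in s) && (t `<=` s))
          (t \in closed_star w K).
Proof.
rewrite /closed_star !inE /=.
apply: (iffP andP) => [[tK /existsP [s Hs]]|[tK [s sK Hs]]].
  by split=> //; exists (val s) => //; exact: valP.
by split=> //; apply/existsP; exists [` sK].
Qed.

Lemma act_closed_starE w K act t :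
  (t \in act_closed_star w K act) = (t \in closed_star w K) && (t `<=` act).
Proof. by rewrite /act_closed_star !inE. Qed.

Lemma contractP u v (K : complex) m :
  reflect (exists2 s, s \in K & m = contract_map u v @` s) (m \in contract u v K).
Proof. exact: imfsetP. Qed.

Lemma contract_mapE u v (s : simplex) :
  contract_map u v @` s = if u \in s then v |` (s `\ u) else s.
Proof.
rewrite /contract_map; apply/fsetP => x; apply/imfsetP/idP.
  move=> [y ys ->]; case: (y =P u) => [eq_yu|/eqP yu].
    by rewrite -eq_yu ys fset1U1.
  by case: ifP => _; rewrite ?inE ?yu ?ys ?orbT.
case: ifP => us; last first.
  by move=> xs; exists x => //; case: (x =P u) => // xu; rewrite xu us in xs.
case/fset1UP => [->|/fsetD1P [/negPf xu xs]]; first by exists u; rewrite ?eqxx.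
by exists x; rewrite ?xu.
Qed.

Lemma notin_contract_map u v (s : simplex) : u != v -> u \notin contract_map u v @` s.
Proof.
move=> neq_uv; apply/imfsetP => -[y _]; rewrite /contract_map.
case: (y =P u) => [_ eq_uv|/eqP neq_yu eq_uy]; first by rewrite eq_uv eqxx in neq_uv.
by rewrite eq_uy eqxx in neq_yu.
Qed.

Lemma vertex_of_mem (K : complex) s x :
  is_complex K -> s \in K -> x \in s -> is_vertex x K.
Proof.
by move=> [_ faceK] sK xs; apply: faceK sK _ (fset_neq0 (fset11 x)); rewrite fsub1set.
Qed.

Lemma collapses_sub K L : collapses K L -> L `<=` K.
Proof.
elim=> [K0|K0 K1 L0 [s [t [_ ->]]] _ sub_L0]; first exact: fsubset_refl.
exact: fsubset_trans sub_L0 (fsubsetDl _ _).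
Qed.

Lemma collapses_trans K L M : collapses K L -> collapses L M -> collapses K M.
Proof. by elim=> // K0 K1 L0 K01 _ IH /IH; apply: collapses_step. Qed.

Lemma collapsesU K L (C : complex) : collapses K L ->
  (forall c t, c \in C -> t `<=` c -> t \in K -> t \in L) ->
  collapses (K `|` C) (L `|` C).
Proof.
elim=> [K0|K0 K1 L0 [s [t [[sK [/andP [tK st] uniq_t]] ->]]] collL IH] faceC.
  exact: collapses_refl.
have st_notin_C x : x \in [fset s; t] -> x \notin C.
  move=> xst; apply/negP => xC.
  have xK : x \in K0 by case/fset2P: xst => ->.
  have := fsubsetP (collapses_sub collL) x (faceC _ _ xC (fsubset_refl x) xK).
  by rewrite in_fsetD xst.
apply: (collapses_step (K' := (K0 `\` [fset s; t]) `|` C)).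
  exists s, t; split.
    split; first by rewrite inE sK.
    split=> [|t' /andP [] /[!inE] /orP [t'K|t'C] st']; first by rewrite /proper_coface inE tK.
      by apply: uniq_t; rewrite /proper_coface t'K.
    have /(fsubsetP (collapses_sub collL)) := faceC _ _ t'C (fproper_sub st') sK.
    by rewrite in_fsetD fset21.
  rewrite fsetDUl; have /fsetDidPl -> // : [disjoint C & [fset s; t]].
  by apply/fdisjointP => x xC; apply: contraTN xC => /st_notin_C.
apply: IH => c t0 cC t0c /fsetDP [t0K _]; exact: faceC cC t0c t0K.
Qed.

Lemma elementary_collapse_pair (K : complex) w r :
  r \in K -> w \notin r -> w |` r \in K ->
  (forall m, proper_coface K r m -> m `\ w = r) ->
  elementary_collapse K (K `\` [fset r; w |` r]).
Proof.
move=> rK wr wrK coface_r; exists r, (w |` r); split=> //; split=> //.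
have r_lt_wr : r `<` w |` r.
  by rewrite fproperEneq fsubsetU1 andbT; apply: contraNneq wr => ->; rewrite fset1U1.
split=> [|m /[dup] /coface_r eq_r /andP [_ rm]]; first by rewrite /proper_coface wrK.
case: (fsetD1_cases w m); rewrite eq_r // => eq_m.
by rewrite -eq_m fproperEneq eqxx in rm.
Qed.

Lemma collapses_cone_pairs (K : complex) w (P : {fset simplex}) :
  (forall r, r \in P -> [/\ w \notin r, r \in K & w |` r \in K]) ->
  (forall r m, r \in P -> m \in K -> r `<` m -> m `\ w \in P) ->
  collapses K (K `\` (P `|` cone w P)).
Proof.
have [n] := ubnP #|`P|; elim: n K P => // n IH K P ltP pairP closedP.
have [->|[r0 r0P]] := fset_0Vmem P.
  by rewrite cone0 fsetU0 fsetD0; exact: collapses_refl.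
(* Remove a largest r first: by [closedP] and maximality, w |` r is then the
   only proper coface of r. *)
have [[r rP] _ r_max] := @arg_maxnP P [` r0P] predT (fun r => #|` val r|) isT.
have {}r_max r' : r' \in P -> #|` r'| <= #|` r| by move=> r'P; exact: (r_max [` r'P]).
have [wr rK wrK] := pairP r rP.
rewrite (cone_pairsD1 w rP) -fsetDDl.
apply: collapses_step (elementary_collapse_pair rK wr wrK _) _.
  move=> m /andP [mK rm]; apply/eqP; rewrite eq_sym eqEfcard r_max ?andbT.
    by rewrite fsubsetD1 (fproper_sub rm) wr.
  exact: closedP rP mK rm.
apply: IH.
- by move: ltP; rewrite (cardfsD1 r) rP add1n ltnS.
- move=> r' /fsetD1P [r'r r'P]; have [wr' r'K wr'K] := pairP r' r'P.
  split=> //; rewrite in_fsetD ?r'K ?wr'K andbT !inE negb_or.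
    by rewrite r'r; apply: contraNneq wr' => ->; rewrite fset1U1.
  apply/andP; split; first by apply: contraNneq wr => <-; rewrite fset1U1.
  by apply: contraNneq r'r => /(fsetU1_inj wr' wr) ->.
- move=> r' m /fsetD1P [r'r r'P] /fsetDP [mK m_notin] r'm.
  rewrite in_fsetD1 (closedP _ _ r'P mK r'm) andbT.
  apply: contraNneq m_notin => eq_r; rewrite !inE.
  by case: (fsetD1_cases w m) => ->; rewrite eq_r eqxx ?orbT.
Qed.

Section ClosedStar.
Variables (K : complex) (u : nat).
Hypothesis complexK : is_complex K.

Lemma closed_star_sub t : t \in closed_star u K -> t \in K /\ u |` t \in K.
Proof.
case/closed_starP => tK [s sK /andP [us ts]]; split=> //.
by apply: complexK.2 sK _ (fset_neq0 (fset1U1 u t)); rewrite fsubUset fsub1set us.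
Qed.

Lemma mem_closed_star (s t : simplex) :
  s \in K -> u \in s -> t `<=` s -> t != fset0 -> t \in closed_star u K.
Proof.
move=> sK us ts t_neq0; apply/closed_starP; split; first exact: complexK.2 sK ts t_neq0.
by exists s; rewrite ?us.
Qed.

End ClosedStar.

Section Contraction.
Variables (K : complex) (u v : nat).
Hypotheses (complexK : is_complex K) (neq_uv : u != v) (vertex_v : is_vertex v K).

Let C := cone v (closed_star u K).
Let P := [fset r in K | (u \in r) && (v \notin r)].

Let mem_P r : (r \in P) = [&& r \in K, u \in r & v \notin r].
Proof. by rewrite !inE. Qed.

Lemma vertex_cone_closed_star c x : c \in C -> x \in c -> is_vertex x K.
Proof.
case/coneP => t /(closed_star_sub complexK) [_ utK] -> /fset1UP [-> //|xt].
exact: vertex_of_mem complexK utK (fset1Ur _ xt).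
Qed.

Lemma face_cone_closed_star m t :
  m \in K `|` C -> t `<=` m -> t != fset0 -> t \in K `|` C.
Proof.
rewrite !inE => /orP [mK|/coneP [tau tau_star ->]] tm t_neq0.
  by rewrite (complexK.2 _ _ mK tm t_neq0).
have [tauK utauK] := closed_star_sub complexK tau_star.
have tv_tau : t `\ v `<=` tau.
  apply/fsubsetP => x /fsetD1P [xv xt].
  by case/fset1UP: (fsubsetP tm x xt) => // eq_xv; rewrite eq_xv eqxx in xv.
have [vt|vt] := boolP (v \in t); last first.
  by rewrite (complexK.2 _ _ tauK _ t_neq0) // -(mem_fsetD1 vt).
have [/eqP tv0|tv_neq0] := boolP (t `\ v == fset0).
  by rewrite -(fsetD1K vt) tv0 fsetU0 [_ \in K]vertex_v.
apply/orP; right; rewrite -(fsetD1K vt); apply: mem_cone.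
apply: (mem_closed_star complexK utauK (fset1U1 u tau) _ tv_neq0).
exact: fsubset_trans tv_tau (fsubsetU1 _ _).
Qed.

Lemma complex_cone_closed_star : is_complex (K `|` C).
Proof.
split=> [m|]; last exact: face_cone_closed_star.
rewrite inE => /orP [/complexK.1 //|/coneP [t _ ->]]; exact: fset_neq0 (fset1U1 v t).
Qed.

Lemma fsetD1_apex_in_K m : m \in K `|` C -> u \in m -> m `\ v \in K.
Proof.
move=> mKC um; have umv : u \in m `\ v by rewrite in_fsetD1 neq_uv um.
have := face_cone_closed_star mKC (fsubsetDl _ _) (fset_neq0 umv).
rewrite inE => /orP [//|/coneP [t _ eq_t]].
by have := fset1U1 v t; rewrite -eq_t in_fsetD1 eqxx.
Qed.

Lemma mem_contract m : (m \in contract u v K) = (m \in K `|` C) && (u \notin m).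
Proof.
apply/contractP/andP => [[s sK ->]|[mKC um]].
  split; last exact: notin_contract_map.
  rewrite contract_mapE inE; case: ifP => us; last by rewrite sK.
  have [/eqP su0|su_neq0] := boolP (s `\ u == fset0).
    by rewrite su0 fsetU0 [_ \in K]vertex_v.
  by rewrite mem_cone ?orbT // (mem_closed_star complexK sK us (fsubsetDl _ _)).
move: mKC; rewrite inE => /orP [mK|/coneP [t t_star eq_m]].
  by exists m => //; rewrite contract_mapE (negbTE um).
have [_ utK] := closed_star_sub complexK t_star.
have ut : u \notin t by apply: contra um; rewrite eq_m; exact: fset1Ur.
by exists (u |` t) => //; rewrite contract_mapE fset1U1 fsetU1K.
Qed.

Lemma mem_cone_pairs m : m \in K `|` C -> (m \in P `|` cone v P) = (u \in m).
Proof.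
move=> mKC; apply/idP/idP.
  rewrite inE => /orP [|/coneP [r]]; rewrite !inE => /and3P [_ ur _] //.
  by move=> ->; exact: fset1Ur.
move=> um; have mvP : m `\ v \in P.
  by rewrite mem_P fsetD1_apex_in_K // in_fsetD1 neq_uv um fsetD11.
by rewrite inE; case: (fsetD1_cases v m) => ->; rewrite ?mvP ?mem_cone ?orbT.
Qed.

Lemma collapses_contract : collapses (K `|` C) (contract u v K).
Proof.
have -> : contract u v K = (K `|` C) `\` (P `|` cone v P).
  apply/fsetP => m; rewrite mem_contract in_fsetD.
  by case: (boolP (m \in K `|` C)) => [/mem_cone_pairs ->|]; rewrite ?andbT ?andbF.
apply: collapses_cone_pairs => [r|r m].
  rewrite mem_P => /and3P [rK ur vr]; split=> //; first by rewrite inE rK.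
  rewrite inE mem_cone ?orbT //.
  exact: (mem_closed_star complexK rK ur (fsubset_refl r) (fset_neq0 ur)).
rewrite mem_P => /and3P [rK ur vr] mKC rm.
have um : u \in m := fsubsetP (fproper_sub rm) u ur.
by rewrite mem_P fsetD1_apex_in_K // in_fsetD1 neq_uv um fsetD11.
Qed.

Lemma complex_contract : is_complex (contract u v K).
Proof.
have [nonempty_KC _] := complex_cone_closed_star.
split=> [m|m t]; rewrite !mem_contract => /andP [mKC um]; first exact: nonempty_KC.
move=> tm t_neq0; rewrite (face_cone_closed_star mKC tm t_neq0).
exact: contra (fsubsetP tm u) um.
Qed.

Lemma vertex_contract w : is_vertex w (contract u v K) = (w != u) && is_vertex w K.
Proof.
rewrite /is_vertex mem_contract in_fset1 eq_sym andbC; congr (_ && _).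
rewrite inE; apply/orP/idP => [[//|/coneP [t _ eq_w]]|]; last by left.
by have /fset1P <- : v \in [fset w] by rewrite eq_w fset1U1.
Qed.

End Contraction.

Record coning_invariant (K Kh : complex) (act : {fset nat}) : Prop := ConingInvariant {
  complex_K : is_complex K;
  active_vertex : forall w, (w \in act) = is_vertex w K;
  K_sub_Khat : K `<=` Kh;
  active_in_K : forall t, t \in Kh -> t `<=` act -> t \in K;
  complex_Khat : is_complex Kh;
  collapses_Khat : collapses Kh K }.

Lemma coning_invariant0 : coning_invariant fset0 fset0 fset0.
Proof. by split=> //; exact: collapses_refl. Qed.

Definition occurs_in (x : nat) (K : complex) : Prop := exists2 t, t \in K & x \in t.

Section ConingStep.
Variables (K Kh : complex) (act : {fset nat}).
Hypothesis coning : coning_invariant K Kh act.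

Lemma active_of_mem s : s \in K -> s `<=` act.
Proof.
move=> sK; apply/fsubsetP => x xs; rewrite (active_vertex coning).
exact: vertex_of_mem (complex_K coning) sK xs.
Qed.

Lemma act_closed_star_coning u :
  is_vertex u K -> act_closed_star u Kh act = closed_star u K.
Proof.
move=> vertex_u; apply/fsetP => t; rewrite act_closed_starE.
apply/andP/closed_starP => [[/closed_starP [tKh [s sKh /andP [us ts]]] t_act]|].
  have ut_act : u |` t `<=` act by rewrite fsubUset fsub1set (active_vertex coning) vertex_u.
  have utKh : u |` t \in Kh.
    apply: (complex_Khat coning).2 sKh _ (fset_neq0 (fset1U1 u t)).
    by rewrite fsubUset fsub1set us.
  split; first exact: (active_in_K coning tKh t_act).
  by exists (u |` t); [exact: (active_in_K coning utKh ut_act) | rewrite fset1U1 fsubsetU1].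
move=> [tK [s sK /andP [us ts]]]; split; last exact: fsubset_trans ts (active_of_mem sK).
have sub_Kh := fsubsetP (K_sub_Khat coning).
by apply/closed_starP; split; [exact: sub_Kh | exists s; rewrite ?sub_Kh ?us].
Qed.

Lemma coning_invariant_contract u v : u != v -> is_vertex u K -> is_vertex v K ->
  coning_invariant (contract u v K) (Kh `|` cone v (act_closed_star u Kh act)) (act `\ u).
Proof.
move=> neq_uv vertex_u vertex_v; rewrite act_closed_star_coning //.
have complexK := complex_K coning; set C := cone v (closed_star u K).
have C_act c : c \in C -> c `<=` act.
  move=> cC; apply/fsubsetP => x xc.
  by rewrite (active_vertex coning) (vertex_cone_closed_star complexK vertex_v cC xc).
have KC_sub : K `|` C `<=` Kh `|` C := fsetSU C (K_sub_Khat coning).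
have [nonempty_KC face_KC] := complex_cone_closed_star u complexK vertex_v.
split.
- exact: complex_contract.
- by move=> w; rewrite vertex_contract // in_fsetD1 (active_vertex coning).
- by apply/fsubsetP => m; rewrite mem_contract // => /andP [/(fsubsetP KC_sub)].
- move=> t tKhC /fsubsetD1P [t_act ut]; rewrite mem_contract // ut andbT.
  move: tKhC; rewrite !inE => /orP [tKh|->]; last by rewrite orbT.
  by rewrite (active_in_K coning tKh t_act).
- split=> [m|m t]; rewrite inE => /orP [mKh|mC].
  + exact: (complex_Khat coning).1.
  + by apply: nonempty_KC; rewrite inE mC orbT.
  + by move=> tm t_neq0; rewrite inE ((complex_Khat coning).2 _ _ mKh tm t_neq0).
  + by move=> tm t_neq0; apply/(fsubsetP KC_sub)/(face_KC m); rewrite ?inE ?mC ?orbT.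
- apply: collapses_trans (collapses_contract complexK neq_uv vertex_v).
  apply: collapsesU (collapses_Khat coning) _ => c t cC tc tKh.
  exact: (active_in_K coning tKh (fsubset_trans tc (C_act c cC))).
Qed.

Lemma coning_invariant_incl s : s \notin K -> is_complex (s |` K) ->
  (forall w, s = [fset w] -> ~ occurs_in w Kh) ->
  coning_invariant (s |` K) (s |` Kh) (if #|` s| == 1 then act `|` s else act).
Proof.
move=> sK complex_sK fresh; set act' := if _ then _ else _.
have vertex_sK w : (w \in act') = is_vertex w (s |` K).
  have -> : is_vertex w (s |` K) = ([fset w] == s) || is_vertex w K.
    by rewrite /is_vertex in_fset1U.
  rewrite -(active_vertex coning) /act'; case: ifP => [/cardfs1P [a ->]|card_s].
    by rewrite !inE (inj_eq (@fset1_inj _)) orbC.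
  by have /negPf -> : [fset w] != s by apply: contraFneq card_s => <-; rewrite cardfs1.
have Khat_act t x : t \in Kh -> x \in t -> is_vertex x (s |` K) -> x \in act.
  move=> tKh xt; rewrite /is_vertex in_fset1U (active_vertex coning) => /orP [/eqP eq_s|//].
  by case: (fresh x (esym eq_s)); exists t.
have faces_act t : t \in Kh -> t `<=` act' -> t `<=` act.
  move=> tKh t_act; apply/fsubsetP => x xt.
  by apply: (Khat_act _ _ tKh xt); rewrite -vertex_sK (fsubsetP t_act x xt).
split=> //.
- exact: fsetUS (K_sub_Khat coning).
- move=> t; rewrite in_fset1U => /orP [/eqP -> _|tKh t_act]; first exact: fset1U1.
  by rewrite in_fset1U (active_in_K coning tKh) ?orbT ?faces_act.
- split=> [m|m t]; rewrite in_fset1U => /orP [/eqP ->|mKh].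
  + exact: complex_sK.1 _ (fset1U1 s K).
  + exact: (complex_Khat coning).1.
  + move=> ts t_neq0; apply: (fsubsetP (fsetUS [fset s] (K_sub_Khat coning))).
    exact: complex_sK.2 (fset1U1 s K) ts t_neq0.
  + by move=> tm t_neq0; rewrite in_fset1U ((complex_Khat coning).2 _ _ mKh tm t_neq0) orbT.
- rewrite fsetUC [s |` K]fsetUC; apply: collapsesU (collapses_Khat coning) _.
  move=> c t /fset1P -> ts tKh; apply: (active_in_K coning tKh).
  apply: (faces_act _ tKh); apply/fsubsetP => x xt; rewrite vertex_sK.
  exact: vertex_of_mem complex_sK (fset1U1 s K) (fsubsetP ts x xt).
Qed.

End ConingStep.

Lemma act_closed_star_sub w (K : complex) act : act_closed_star w K act `<=` K.
Proof. by apply/fsubsetP => t; rewrite act_closed_starE => /andP [/closed_starP []]. Qed.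

Lemma occurs_cone (Kh : complex) v (S : {fset simplex}) x :
  S `<=` Kh -> occurs_in x (Kh `|` cone v S) -> occurs_in x Kh \/ x = v.
Proof.
move=> S_sub [m]; rewrite inE => /orP [mKh xm|/coneP [t tS ->] /fset1UP [->|xt]].
- by left; exists m.
- by right.
- by left; exists t; rewrite ?(fsubsetP S_sub).
Qed.

Definition coning_state (st : state) : Prop := coning_invariant st.1.1 st.1.2 st.2.

Definition admissible (st : state) (op : tower_op) : Prop :=
  match op with
  | Incl s => [/\ s \notin st.1.1, is_complex (s |` st.1.1)
               & forall w, s = [fset w] -> ~ occurs_in w st.1.2]
  | Contr u v => [/\ u != v, is_vertex u st.1.1 & is_vertex v st.1.1]
  end.

Lemma coning_state_step st op :
  coning_state st -> admissible st op -> coning_state (step st op).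
Proof.
case: st => [[K Kh] act] coning.
case: op => [s [sK complex_sK fresh]|u v [neq_uv vertex_u vertex_v]] /=.
  exact: coning_invariant_incl.
case: ifP => _; first exact: coning_invariant_contract.
by apply: coning_invariant_contract; rewrite // eq_sym.
Qed.

Lemma occurs_step st op x : admissible st op -> occurs_in x (step st op).1.2 ->
  [\/ occurs_in x st.1.2, is_vertex x st.1.1 | is_vertex x (step st op).1.1].
Proof.
case: st => [[K Kh] act].
case: op => [s [_ complex_sK _]|u v [_ vertex_u vertex_v]] /=.
  case=> t; rewrite in_fset1U => /orP [/eqP -> xs|tKh xt]; last by constructor 1; exists t.
  by constructor 3; exact: vertex_of_mem complex_sK (fset1U1 s K) xs.
by case: ifP => _ /= /(occurs_cone (act_closed_star_sub _ _ _)) [|->]; constructor.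
Qed.

(* The second conjunct transports the freshness condition of [valid_op], which
   only mentions the K_j, to hat K_i. *)
Definition tower_invariant (ops : seq tower_op) (i : nat) : Prop :=
  coning_state (state_at ops i) /\
  forall x, occurs_in x (Khat_at ops i) -> exists2 j, j <= i & is_vertex x (K_at ops j).

Lemma state_at_succ ops i : i < size ops ->
  state_at ops i.+1 = step (state_at ops i) (nth (Contr 0 0) ops i).
Proof. by move=> lt_i; rewrite /state_at (take_nth (Contr 0 0) lt_i) foldl_rcons. Qed.

Lemma admissible_at ops i : valid_op ops i (nth (Contr 0 0) ops i) ->
  (forall x, occurs_in x (Khat_at ops i) -> exists2 j, j <= i & is_vertex x (K_at ops j)) ->
  admissible (state_at ops i) (nth (Contr 0 0) ops i).
Proof.
case: (nth _ ops i) => [s [sK [complex_sK fresh]]|u v [neq_uv [vertex_u vertex_v]]] history;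
  split=> // w eq_s /history [j le_ji vertex_w].
by move/negP: (fresh w eq_s j le_ji).
Qed.

Lemma tower_invariant_succ ops i : i < size ops ->
  valid_op ops i (nth (Contr 0 0) ops i) -> tower_invariant ops i -> tower_invariant ops i.+1.
Proof.
move=> lt_i valid_i [coning history]; have adm := admissible_at valid_i history.
rewrite /tower_invariant {1}/Khat_at (state_at_succ lt_i).
split=> [|x /(occurs_step adm) [/history [j le_ji vertex_x]|vertex_x|vertex_x]].
- exact: coning_state_step.
- by exists j => //; exact: leqW.
- by exists i.
- by exists i.+1 => //; rewrite /K_at (state_at_succ lt_i).
Qed.

Lemma tower_invariant_at ops : valid_tower ops ->
  forall i, i <= size ops -> tower_invariant ops i.
Proof.
move=> valid; elim=> [|i IH] le_i.
  rewrite /tower_invariant /Khat_at /state_at take0.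
  by split=> [|x []]; first exact: coning_invariant0.
exact: tower_invariant_succ le_i (valid i le_i) (IH (ltnW le_i)).
Qed.

Theorem lemma5 (ops : seq tower_op) :
  valid_tower ops ->
  forall i, i <= size ops ->
    K_at ops i `<=` Khat_at ops i /\ collapses (Khat_at ops i) (K_at ops i).
Proof.
move=> valid i le_i; have [coning _] := tower_invariant_at valid le_i.
exact: conj (K_sub_Khat coning) (collapses_Khat coning).
Qed.
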